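(* Let $(\omega,c)\in\mathbb{R}^2$ satisfy: $\omega>c^2/4$, or $\omega=c^2/4$ and $c>0$. Write $c=2s\sqrt\omega$ with $s\in(-1,1]$, and let $\beta_0=\frac13(2s+\sqrt{3+s^2})$, $\beta_1=1+s$. Then the function $(\beta_0,\beta_1)\ni\eta\mapsto k(\eta)\in(0,1)$ is strictly increasing, where $$k(\eta)^2=\frac{3\eta^2+(\sqrt{f_s(\eta)}-6s)\eta+2(s^2-1)}{2\eta\sqrt{f_s(\eta)}},\qquad f_s(\eta)=-3\eta^2+4s\eta+4.$$
   Context: Equivalently, with $\eta_3=4\sqrt\omega\,\eta\in(\alpha_0,\alpha_1)$, $\alpha_0=\tfrac13(4c+\sqrt{48\omega+4c^2})$, $\alpha_1=4\sqrt\omega+2c$, $A(x)=-3x^2+8cx+64\omega$, $\eta_1=\frac{-\eta_3+4c-\sqrt{A(\eta_3)}}{2}$, $\eta_2=\frac{-\eta_3+4c+\sqrt{A(\eta_3)}}{2}$, one has $k^2=\frac{-\eta_1(\eta_3-\eta_2)}{\eta_3(\eta_2-\eta_1)}$, the elliptic modulus of the periodic solution; $f_s(\eta)>0$ on $(\beta_0,\beta_1)$. *)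

From mathcomp Require Import all_boot all_order all_algebra.
From mathcomp Require Import reals.
Set Implicit Arguments. Unset Strict Implicit. Unset Printing Implicit Defensive.
Import Order.TTheory GRing.Theory Num.Theory.
Local Open Scope ring_scope.

Section Defs.
Variable R : realType.

Definition fs (s eta : R) : R := - 3 * eta ^+ 2 + 4 * s * eta + 4.

Definition beta0 (s : R) : R := (2 * s + Num.sqrt (3 + s ^+ 2)) / 3.
Definition beta1 (s : R) : R := 1 + s.

Definition ksq (s eta : R) : R :=
  (3 * eta ^+ 2 + (Num.sqrt (fs s eta) - 6 * s) * eta + 2 * (s ^+ 2 - 1))
  / (2 * eta * Num.sqrt (fs s eta)).

Definition kmod (s eta : R) : R := Num.sqrt (ksq s eta).

End Defs.

(* With [r = sqrt (f_s eta)] and [r^2 = f_s eta], the numerator of [k^2] factors: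
   [k^2 = (1 + (eta - 2s)/r) (3 - (2s + r)/eta) / 4] and
   [1 - k^2 = (2s + r - eta) (3 eta - 2s + r) / (4 eta r)].
   On [(beta0, beta1)] one has [|eta - 2s| < r < 3 eta - 2s], so all factors are
   positive and [0 < k < 1].  Monotonicity follows because [(eta - 2s)/r]
   increases and [(2s + r)/eta] decreases; each is checked for [a < b] by
   multiplying the cross difference by a positive conjugate, which clears
   the square roots. *)

From mathcomp Require Import all_boot all_order all_algebra.
From mathcomp Require Import reals ring lra.
Import Order.TTheory GRing.Theory Num.Theory.
Local Open Scope ring_scope.

(* [lra] and [nra] ignore section hypotheses; proofs below copy them into the
   local context first. *)
Section EllipticModulus.
Variables (R : realType) (s : R).
Hypothesis s_range : -1 < s <= 1.

Local Notation r eta := (Num.sqrt (fs s eta)).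

Lemma ksq_num_factor {eta x : R} : x ^+ 2 = fs s eta ->
  3 * eta ^+ 2 + (x - 6 * s) * eta + 2 * (s ^+ 2 - 1) =
  (eta - 2 * s + x) * (3 * eta - 2 * s - x) / 2.
Proof. by rewrite /fs => x2; lra. Qed.

Section AtAPoint.
Context {eta : R}.
Hypothesis eta_in : beta0 s < eta < beta1 s.

Lemma branch_bounds : [/\ (5 * s + 3) / 6 < eta, eta < 1 + s,
  0 < 3 * eta - 2 * s & 3 + s ^+ 2 < (3 * eta - 2 * s) ^+ 2].
Proof.
have [s1 s2] := andP s_range; have [h1 h2] := andP eta_in.
move: h1; rewrite /beta0; set q := Num.sqrt _ => h1.
have q0 : 0 <= q := sqrtr_ge0 _.
have q2 : q ^+ 2 = 3 + s ^+ 2 by rewrite sqr_sqrtr // addr_ge0 // sqr_ge0.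
(* [4 (3 + s^2) - (3 + s)^2 = 3 (s - 1)^2] *)
have q3 : (3 + s) / 2 <= q by nra.
split; [lra | exact: h2 | lra | nra].
Qed.

Lemma eta_gt0 : 0 < eta.
Proof. have [s1 s2] := andP s_range; have [_ _ e3 e4] := branch_bounds; nra. Qed.

Lemma fs_gt0 : 0 < fs s eta.
Proof.
have [s1 s2] := andP s_range; have [e1 e2 e3 e4] := branch_bounds.
rewrite /fs; nra.
Qed.

Lemma sqr_sqrt_fs : r eta ^+ 2 = fs s eta.
Proof. exact: sqr_sqrtr (ltW fs_gt0). Qed.

Lemma sqrt_fs_gt0 : 0 < r eta. Proof. by rewrite sqrtr_gt0 fs_gt0. Qed.

Lemma dist_lt_sqrt_fs : `|eta - 2 * s| < r eta.
Proof.
have [s1 s2] := andP s_range; have [e1 e2 e3 e4] := branch_bounds.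
rewrite -ltr_sqr ?nnegrE ?normr_ge0 ?sqrtr_ge0 // real_normK ?num_real //.
rewrite sqr_sqrt_fs /fs; nra.
Qed.

Lemma sqrt_fs_lt : r eta < 3 * eta - 2 * s.
Proof.
have [e1 e2 e3 e4] := branch_bounds.
rewrite -ltr_sqr ?nnegrE ?sqrtr_ge0 ?(ltW e3) // sqr_sqrt_fs /fs; nra.
Qed.

Lemma ksq_factor :
  ksq s eta = (1 + (eta - 2 * s) / r eta) * (3 - (2 * s + r eta) / eta) / 4.
Proof.
rewrite /ksq (ksq_num_factor sqr_sqrt_fs); field.
by rewrite !gt_eqF ?eta_gt0 ?sqrt_fs_gt0.
Qed.

Lemma ksq_factors_gt0 :
  0 < 1 + (eta - 2 * s) / r eta /\ 0 < 3 - (2 * s + r eta) / eta.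
Proof.
have e0 := eta_gt0; have r0 := sqrt_fs_gt0.
have := dist_lt_sqrt_fs; have := sqrt_fs_lt; rewrite ltr_norml => rlt /andP[lt1 lt2].
split.
  by rewrite -ltrBlDl sub0r ltr_pdivlMr // mulN1r.
by rewrite subr_gt0 ltr_pdivrMr //; lra.
Qed.

Lemma ksq_gt0 : 0 < ksq s eta.
Proof.
have [f1 f2] := ksq_factors_gt0.
by rewrite ksq_factor divr_gt0 // mulr_gt0.
Qed.

Lemma ksq_lt1 : ksq s eta < 1.
Proof.
have e0 := eta_gt0; have r0 := sqrt_fs_gt0; have r2 := sqr_sqrt_fs.
have := dist_lt_sqrt_fs; have := sqrt_fs_lt; rewrite ltr_norml => rlt /andP[lt1 lt2].
(* [4 eta r - (eta - 2s + r) (3 eta - 2s - r) = (2s + r - eta) (3 eta - 2s + r)]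
   modulo [r ^+ 2 = fs s eta]. *)
have P : 0 < (2 * s + r eta - eta) * (3 * eta - 2 * s + r eta) by apply: mulr_gt0; lra.
rewrite /ksq (ksq_num_factor r2) ltr_pdivrMr ?mul1r ?mulr_gt0 //.
move: r2; rewrite /fs; lra.
Qed.

Lemma s_mul_eta_add_sqrt_gtN2 : -2 < s * (eta + r eta).
Proof.
have [s1 s2] := andP s_range; have [_ e2 _ _] := branch_bounds.
have e0 := eta_gt0; have r0 := sqrt_fs_gt0; have rlt := sqrt_fs_lt.
have [sp|sn] := leP 0 s; nra.
Qed.

End AtAPoint.

Section TwoPoints.
Variables a b : R.
Hypotheses (a_in : beta0 s < a < beta1 s) (b_in : beta0 s < b < beta1 s).
Hypothesis a_lt_b : a < b.

Lemma sqrt_fs_le : r b <= r a.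
Proof.
have [_ _ a3 _] := branch_bounds a_in; have ab := a_lt_b.
rewrite ler_wsqrtr // /fs; nra.
Qed.

Lemma cross_term_gt0 : 0 < 4 + 3 * a * b - 6 * s * (a + b) + 8 * s ^+ 2 + r a * r b.
Proof.
have [s1 s2] := andP s_range.
have [a1 _ _ _] := branch_bounds a_in; have [_ b2 _ _] := branch_bounds b_in.
have rb2 := sqr_sqrt_fs b_in; have rb0 := sqrt_fs_gt0 b_in; have ab := a_lt_b.
(* As [r b <= r a], the cross term is at least [8 (1 + s^2 - s b) - 3 (b - a) (b - 2s)]. *)
have : r b * r b <= r a * r b by rewrite ler_pM2r // sqrt_fs_le.
have p1 : 0 < 1 + s ^+ 2 - s * b by have [sp|sn] := leP 0 s; nra.
have Z : 0 < 8 * (1 + s ^+ 2 - s * b) - 3 * (b - a) * (b - 2 * s).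
  have [h|h] := leP b (2 * s); first nra.
  have : (b - a) * (b - 2 * s) <= (b - (5 * s + 3) / 6) * (b - 2 * s) by nra.
  nra.
move: rb2; rewrite /fs -expr2; lra.
Qed.

Lemma sub2s_div_sqrt_fs_lt : (a - 2 * s) / r a < (b - 2 * s) / r b.
Proof.
have ra0 := sqrt_fs_gt0 a_in; have rb0 := sqrt_fs_gt0 b_in.
have ra2 := sqr_sqrt_fs a_in; have rb2 := sqr_sqrt_fs b_in.
have Y := cross_term_gt0; have ab := a_lt_b.
rewrite ltr_pdivrMr // mulrAC ltr_pdivlMr // -subr_gt0.
rewrite -(pmulr_lgt0 _ (addr_gt0 ra0 rb0)).
have -> : ((b - 2 * s) * r a - (a - 2 * s) * r b) * (r a + r b) =
    (b - a) * (4 + 3 * a * b - 6 * s * (a + b) + 8 * s ^+ 2 + r a * r b).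
  apply/eqP; rewrite -subr_eq0; apply/eqP.
  rewrite -[RHS](_ : (b - 2 * s) * (r a ^+ 2 - fs s a) -
                     (a - 2 * s) * (r b ^+ 2 - fs s b) = 0).
    by rewrite /fs; ring.
  by rewrite ra2 rb2 !subrr !mulr0 subrr.
by rewrite mulr_gt0 // subr_gt0.
Qed.

Lemma add2s_sqrt_fs_div_lt : (2 * s + r b) / b < (2 * s + r a) / a.
Proof.
have ra0 := sqrt_fs_gt0 a_in; have rb0 := sqrt_fs_gt0 b_in.
have ra2 := sqr_sqrt_fs a_in; have rb2 := sqr_sqrt_fs b_in.
have a0 := eta_gt0 a_in; have b0 := eta_gt0 b_in; have ab := a_lt_b.
have ha := s_mul_eta_add_sqrt_gtN2 a_in; have hb := s_mul_eta_add_sqrt_gtN2 b_in.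
rewrite ltr_pdivrMr // mulrAC ltr_pdivlMr // -subr_gt0.
have P : 0 < b * r a + a * r b by rewrite addr_gt0 // mulr_gt0.
rewrite -(pmulr_lgt0 _ P).
have -> : ((2 * s + r a) * b - (2 * s + r b) * a) * (b * r a + a * r b) =
    2 * (b - a) * (b * (2 + s * (a + r a)) + a * (2 + s * (b + r b))).
  apply/eqP; rewrite -subr_eq0; apply/eqP.
  rewrite -[RHS](_ : b ^+ 2 * (r a ^+ 2 - fs s a) - a ^+ 2 * (r b ^+ 2 - fs s b) = 0).
    by rewrite /fs; ring.
  by rewrite ra2 rb2 !subrr !mulr0 subrr.
rewrite mulr_gt0 ?mulr_gt0 ?subr_gt0 //.
by apply: addr_gt0; apply: mulr_gt0 => //; lra.
Qed.

Lemma ksq_lt : ksq s a < ksq s b.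
Proof.
have [ua_gt0 va_gt0] := ksq_factors_gt0 a_in.
rewrite (ksq_factor a_in) (ksq_factor b_in) ltr_pM2r ?invr_gt0 //.
apply: ltr_pM; rewrite ?ltW //.
  by rewrite ltrD2l sub2s_div_sqrt_fs_lt.
by rewrite ltrD2l ltrN2 add2s_sqrt_fs_div_lt.
Qed.

End TwoPoints.
End EllipticModulus.

Lemma scaled_c_range {R : realType} {omega c : R} :
  (c ^+ 2 / 4 < omega \/ (omega = c ^+ 2 / 4 /\ 0 < c)) ->
  -1 < c / (2 * Num.sqrt omega) <= 1.
Proof.
case=> [h|[-> c0]].
  have w0 : 0 < omega by apply: le_lt_trans h; rewrite divr_ge0 ?sqr_ge0.
  have q0 : 0 < Num.sqrt omega by rewrite sqrtr_gt0.
  have q2 : Num.sqrt omega ^+ 2 = omega by rewrite sqr_sqrtr // ltW.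
  have d0 : 0 < 2 * Num.sqrt omega by rewrite mulr_gt0.
  rewrite ltr_pdivlMr // ler_pdivrMr //; apply/andP; split; nra.
have -> : c ^+ 2 / 4 = (c / 2) ^+ 2 by field.
rewrite sqrtr_sqr ger0_norm ?divr_ge0 ?(ltW c0) //.
have -> : c / (2 * (c / 2)) = 1 by field; rewrite gt_eqF.
by apply/andP; split; lra.
Qed.

Theorem proposition3p5 (R : realType) (omega c : R) :
  (c ^+ 2 / 4 < omega \/ (omega = c ^+ 2 / 4 /\ 0 < c)) ->
  let s := c / (2 * Num.sqrt omega) in
  (forall eta : R, beta0 s < eta < beta1 s ->
     0 < kmod s eta < 1) /\
  (forall eta1 eta2 : R,
     beta0 s < eta1 < beta1 s -> beta0 s < eta2 < beta1 s ->
     eta1 < eta2 -> kmod s eta1 < kmod s eta2).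
Proof.
move=> H s; have hs : -1 < s <= 1 := scaled_c_range H.
split=> [eta he | a b ha hb ab].
  by rewrite /kmod sqrtr_gt0 ksq_gt0 //= -sqrtr1 ltr_sqrt ?ksq_lt1.
by rewrite /kmod ltr_sqrt ?ksq_gt0 ?ksq_lt.
Qed.
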